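(* Let $X$ be a binary random variable taking values in $\{x_1,x_2\}\subset\mathbb{R}$ with $\mathbb{E}[X]=0$, let $U$ be a random variable on a finite alphabet $\mathcal{U}$ jointly distributed with $X$, and let $\epsilon\ge0$ be such that $\|P_{X|U=u}-P_X\|_1\le\epsilon$ for all $u\in\mathcal{U}$. Then $\mathrm{MMSE}(X|U)\ge\mathrm{Var}(X)-\frac14\epsilon^2(x_1-x_2)^2$. Furthermore, $\mathrm{Var}(X)\le\frac14(x_1-x_2)^2$, and if $x_1=-x_2$ then $\mathrm{Var}(X)=\frac14(x_1-x_2)^2$.
   Context: $\mathrm{MMSE}(X|U)=\sum_u P_U(u)\left(\mathbb{E}(X^2|U=u)-(\mathbb{E}(X|U=u))^2\right)$. $\|\cdot\|_1$ is the $\ell_1$ norm. *)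

From mathcomp Require Import all_boot all_order all_algebra.
Set Implicit Arguments. Unset Strict Implicit. Unset Printing Implicit Defensive.
Import Order.TTheory GRing.Theory Num.Theory.
Local Open Scope ring_scope.

(* The joint pmf is p : U -> bool -> R, p u b = P(U = u, X = xval x1 x2 b);
   label true <-> value x1, label false <-> value x2. *)
Section Defs.
Variables (R : realFieldType) (U : finType).
Variables (p : U -> bool -> R) (x1 x2 : R).

Definition xval (b : bool) : R := if b then x1 else x2.

Definition PU (u : U) : R := \sum_(b : bool) p u b.
Definition PX (b : bool) : R := \sum_(u : U) p u b.

Definition EX : R := \sum_(u : U) \sum_(b : bool) p u b * xval b.
Definition EX2 : R := \sum_(u : U) \sum_(b : bool) p u b * xval b ^+ 2.
Definition VarX : R := EX2 - EX ^+ 2.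

(* conditional quantities given U = u (meaningful when PU u > 0) *)
Definition condPX (u : U) (b : bool) : R := p u b / PU u.
Definition condE (u : U) : R := \sum_(b : bool) condPX u b * xval b.
Definition condE2 (u : U) : R := \sum_(b : bool) condPX u b * xval b ^+ 2.

Definition MMSE : R := \sum_(u : U) PU u * (condE2 u - condE u ^+ 2).

Definition l1dist (u : U) : R := \sum_(b : bool) `|condPX u b - PX b|.
End Defs.

(** Write [q = P(X = x1)] and [r u = P(X = x1 | U = u)].  Both [Var(X)] and
    the conditional variances are Bernoulli variances, [q (1 - q) (x1 - x2)^2]
    and [r u (1 - r u) (x1 - x2)^2].  Since
    [r (1 - r) = q (1 - q) + (1 - 2q)(r - q) - (r - q)^2] and the [r u] average
    to [q] under [P_U], the MMSE is [Var(X) - E[(r U - q)^2] (x1 - x2)^2], and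
    the hypothesis says exactly [|r u - q| <= eps / 2].  The other two claims
    come from [4 q (1 - q) = 1 - (2 q - 1)^2], where [(2 q - 1) x1 = E[X]] when
    [x2 = - x1]. *)
From mathcomp Require Import all_boot all_order all_algebra.
From mathcomp Require Import ring lra.
Set Implicit Arguments. Unset Strict Implicit. Unset Printing Implicit Defensive.
Import Order.TTheory GRing.Theory Num.Theory.
Local Open Scope ring_scope.

Lemma bernoulli_var (R : comPzRingType) (r x1 x2 : R) :
  r * x1 ^+ 2 + (1 - r) * x2 ^+ 2 - (r * x1 + (1 - r) * x2) ^+ 2
  = r * (1 - r) * (x1 - x2) ^+ 2.
Proof. ring. Qed.

Lemma bernoulli_var_defect (R : comPzRingType) (q x1 x2 : R) :
  4 * (q * (1 - q) * (x1 - x2) ^+ 2)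
  = (x1 - x2) ^+ 2 - ((2 * q - 1) * (x1 - x2)) ^+ 2.
Proof. ring. Qed.

Lemma mean_bernoulli_var_ge (R : realFieldType) (I : finType)
    (w r : I -> R) (q d : R) :
  (forall i, 0 <= w i) -> \sum_i w i = 1 -> \sum_i w i * r i = q ->
  (forall i, 0 < w i -> `|r i - q| <= d) ->
  q * (1 - q) - d ^+ 2 <= \sum_i w i * (r i * (1 - r i)).
Proof.
move=> w_ge0 w_sum1 w_mean r_near.
have centered : \sum_i w i * (r i - q) = 0.
  rewrite (eq_bigr _ (fun i _ => mulrBr _ _ _)) sumrB -mulr_suml.
  by rewrite w_sum1 w_mean mul1r subrr.
have spread : \sum_i w i * (r i - q) ^+ 2 <= d ^+ 2.
  rewrite -[d ^+ 2]mul1r -w_sum1 mulr_suml; apply: ler_sum => i _.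
  have [w0 | w_neq0] := eqVneq (w i) 0; first by rewrite w0 !mul0r.
  have w_gt0 : 0 < w i by rewrite lt_def w_neq0 w_ge0.
  apply: ler_wpM2l => //; rewrite -real_normK ?num_real //.
  have := r_near i w_gt0; have := normr_ge0 (r i - q); nra.
have -> : \sum_i w i * (r i * (1 - r i))
          = q * (1 - q) * \sum_i w i + (1 - 2 * q) * \sum_i w i * (r i - q)
            - \sum_i w i * (r i - q) ^+ 2.
  by rewrite !mulr_sumr -big_split /= -sumrB; apply: eq_bigr => i _; ring.
by rewrite w_sum1 centered mulr0 addr0 mulr1 lerB.
Qed.

Section BinaryJointDistribution.
Variables (R : realFieldType) (U : finType) (p : U -> bool -> R) (x1 x2 : R).
Hypothesis p_ge0 : forall u b, 0 <= p u b.
Hypothesis p_sum1 : \sum_u \sum_b p u b = 1.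

Let q := PX p true.
Let r u := condPX p u true.

Lemma PU_ge0 u : 0 <= PU p u.
Proof. by rewrite /PU big_bool addr_ge0. Qed.

Lemma PX_false : PX p false = 1 - q.
Proof.
have : q + PX p false = 1 by rewrite -p_sum1 exchange_big big_bool.
lra.
Qed.

Lemma PU_condPX u b : PU p u * condPX p u b = p u b.
Proof.
have [PU0 | PU_neq0] := eqVneq (PU p u) 0; last by rewrite mulrC divfK.
have : p u true + p u false = 0 by rewrite -big_bool.
by move: (p_ge0 u true) (p_ge0 u false); rewrite PU0 mul0r; case: b; lra.
Qed.

Lemma condPX_false u : 0 < PU p u -> condPX p u false = 1 - r u.
Proof.
move=> PU_gt0; rewrite /r /condPX -[1](divff (lt0r_neq0 PU_gt0)) -mulrBl.
by congr (_ / _); rewrite /PU big_bool /=; ring.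
Qed.

Lemma expectation_bernoulli (f : bool -> R) :
  \sum_u \sum_b p u b * f b = q * f true + (1 - q) * f false.
Proof. by rewrite exchange_big big_bool -!mulr_suml -PX_false. Qed.

Lemma VarX_bernoulli : VarX p x1 x2 = q * (1 - q) * (x1 - x2) ^+ 2.
Proof. by rewrite /VarX /EX2 /EX !expectation_bernoulli bernoulli_var. Qed.

Lemma PU_condVar u :
  PU p u * (condE2 p x1 x2 u - condE p x1 x2 u ^+ 2)
  = PU p u * (r u * (1 - r u)) * (x1 - x2) ^+ 2.
Proof.
have [PU0 | PU_neq0] := eqVneq (PU p u) 0; first by rewrite PU0 !mul0r.
have PU_gt0 : 0 < PU p u by rewrite lt_def PU_neq0 PU_ge0.
by rewrite /condE2 /condE !big_bool /= condPX_false // bernoulli_var !mulrA.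
Qed.

Lemma MMSE_bernoulli :
  MMSE p x1 x2 = (\sum_u PU p u * (r u * (1 - r u))) * (x1 - x2) ^+ 2.
Proof. by rewrite /MMSE mulr_suml; apply: eq_bigr => u _; apply: PU_condVar. Qed.

Lemma mean_condPX : \sum_u PU p u * r u = q.
Proof. by apply: eq_bigr => u _; apply: PU_condPX. Qed.

Lemma l1dist_bernoulli u : 0 < PU p u -> l1dist p u = 2 * `|r u - q|.
Proof.
move=> PU_gt0; rewrite /l1dist big_bool /= condPX_false // PX_false.
have -> : 1 - r u - (1 - q) = - (r u - q) by ring.
by rewrite normrN; ring.
Qed.

Lemma MMSE_ge eps : (forall u, 0 < PU p u -> l1dist p u <= eps) ->
  (q * (1 - q) - (eps / 2) ^+ 2) * (x1 - x2) ^+ 2 <= MMSE p x1 x2.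
Proof.
move=> l1_le; rewrite MMSE_bernoulli ler_wpM2r ?sqr_ge0 //.
apply: mean_bernoulli_var_ge; [exact: PU_ge0 | exact: p_sum1 | exact: mean_condPX |].
by move=> u PU_gt0; have := l1_le u PU_gt0; rewrite l1dist_bernoulli //; lra.
Qed.

End BinaryJointDistribution.

Theorem proposition9 (R : realFieldType) (U : finType) (p : U -> bool -> R)
  (x1 x2 eps : R) :
  (forall u b, 0 <= p u b) ->
  \sum_(u : U) \sum_(b : bool) p u b = 1 ->
  EX p x1 x2 = 0 ->
  0 <= eps ->
  (forall u, 0 < PU p u -> l1dist p u <= eps) ->
  [/\ VarX p x1 x2 - eps ^+ 2 * (x1 - x2) ^+ 2 / 4 <= MMSE p x1 x2,
      VarX p x1 x2 <= (x1 - x2) ^+ 2 / 4 &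
      (x1 = - x2 -> VarX p x1 x2 = (x1 - x2) ^+ 2 / 4)].
Proof.
move=> p_ge0 p_sum1 EX0 _ l1_le.
have defect := bernoulli_var_defect (PX p true) x1 x2.
have MMSE_lb := MMSE_ge x1 x2 p_ge0 p_sum1 l1_le.
rewrite /EX (expectation_bernoulli p_sum1) /= in EX0.
rewrite (VarX_bernoulli x1 x2 p_sum1); split.
- by apply: le_trans MMSE_lb; lra.
- have := sqr_ge0 ((2 * PX p true - 1) * (x1 - x2)); lra.
- move=> x1E; rewrite x1E in EX0 defect *.
  have centered : (2 * PX p true - 1) * (- x2 - x2) = 0.
    by rewrite -(mulr0 2) -EX0; ring.
  rewrite centered expr0n subr0 in defect; lra.
Qed.
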